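(* Let $\mathcal{H}$ be a complex Hilbert space and $B,C\in\mathcal{B}(\mathcal{H})$. Then $$w\left(\begin{bmatrix}0 & B\\ C & 0\end{bmatrix}\right)\ge \frac12\max\{\|B\|,\|C\|\}+\frac14\Big|\,\|B+C^*\|-\|B-C^*\|\,\Big|.$$
   Context: $\mathcal{B}(\mathcal{H})$ is the algebra of bounded linear operators on $\mathcal{H}$ with operator norm $\|\cdot\|$; $A^*$ is the adjoint; $w(A)=\sup_{\|x\|=1}|\langle Ax,x\rangle|$ is the numerical radius. The operator matrix $\begin{bmatrix}A&B\\C&D\end{bmatrix}$ acts on $\mathcal{H}\oplus\mathcal{H}$ by $(x_1,x_2)\mapsto(Ax_1+Bx_2,\,Cx_1+Dx_2)$; $0$ denotes the zero operator. *)

From HB Require Import structures.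
From mathcomp Require Import all_boot all_order all_algebra.
From mathcomp Require Import all_classical reals.
From mathcomp Require Import complex.
Set Implicit Arguments. Unset Strict Implicit. Unset Printing Implicit Defensive.
Import Order.TTheory GRing.Theory Num.Theory.
Local Open Scope ring_scope.
Local Open Scope classical_set_scope.

Record is_inner_product (R : realType) (H : lmodType R[i]) (ip : H -> H -> R[i])
  : Prop := IsInnerProduct {
  ip_linear_l : forall (a : R[i]) (x y z : H), ip (a *: x + y) z = a * ip x z + ip y z;
  ip_conj_sym : forall x y : H, ip y x = conjc (ip x y);
  ip_nonneg : forall x : H, 0 <= ip x x;
  ip_definite : forall x : H, ip x x = 0 -> x = 0 }.

Definition ipnorm (R : realType) (H : lmodType R[i]) (ip : H -> H -> R[i]) (x : H) : R :=
  Num.sqrt (@complex.Re R (ip x x)).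

Definition ip_complete (R : realType) (H : lmodType R[i]) (ip : H -> H -> R[i]) : Prop :=
  forall u : nat -> H,
    (forall e : R, 0 < e -> exists N : nat, forall m n : nat, (N <= m)%N -> (N <= n)%N ->
        ipnorm ip (u m - u n) < e) ->
    exists l : H, forall e : R, 0 < e -> exists N : nat, forall n : nat, (N <= n)%N ->
        ipnorm ip (u n - l) < e.

Definition is_hilbert (R : realType) (H : lmodType R[i]) (ip : H -> H -> R[i]) : Prop :=
  is_inner_product ip /\ ip_complete ip.

Definition bounded_op (R : realType) (H : lmodType R[i]) (ip : H -> H -> R[i])
  (T : H -> H) : Prop :=
  (forall (a : R[i]) (x y : H), T (a *: x + y) = a *: T x + T y) /\
  exists M : R, forall x : H, ipnorm ip (T x) <= M * ipnorm ip x.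

Definition opnorm (R : realType) (H : lmodType R[i]) (ip : H -> H -> R[i])
  (T : H -> H) : R :=
  sup [set ipnorm ip (T x) | x in [set x : H | ipnorm ip x <= 1]].

Definition numrad (R : realType) (H : lmodType R[i]) (ip : H -> H -> R[i])
  (T : H -> H) : R :=
  sup [set ComplexField.Normc.normc (ip (T x) x) | x in [set x : H | ipnorm ip x = 1]].

Definition is_adjoint (R : realType) (H : lmodType R[i]) (ip : H -> H -> R[i])
  (T S : H -> H) : Prop :=
  forall x y : H, ip (T x) y = ip x (S y).

Definition ip_sum (R : realType) (H : lmodType R[i]) (ip : H -> H -> R[i])
  (p q : H * H) : R[i] :=
  ip p.1 q.1 + ip p.2 q.2.

Definition opmatrix (R : realType) (H : lmodType R[i]) (A B C D : H -> H)
  (p : H * H) : H * H :=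
  (A p.1 + B p.2, C p.1 + D p.2).

Definition zero_op (R : realType) (H : lmodType R[i]) : H -> H := fun _ => 0.

(* For a unit vector (x, y) of H (+) H the quadratic form of [0 B; C 0] is
   <B y, x> + <C x, y> = <B y, x> + <x, C^* y>, whose real part is
   Re <(B + C^* ) y, x>; replacing y by 'i y, its imaginary part becomes
   Re <(B - C^* ) y, x>.  Both are therefore at most w, and testing on the unit
   pair (D y / (sqrt 2 ||D y||), y / (sqrt 2 ||y||)) gives ||B +- C^*|| <= 2 w.
   Writing 2 B and 2 C^* as sum and difference of B + C^* and B - C^*, and using
   ||C|| <= ||C^*||, both ||B|| and ||C|| are at most (a + b) / 2 where
   a = ||B + C^*||, b = ||B - C^*||; the claim follows from max(a, b) <= 2 w. *)

From HB Require Import structures.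
From mathcomp Require Import all_boot all_order all_algebra.
From mathcomp Require Import all_classical reals.
From mathcomp Require Import complex.
From mathcomp Require Import ring lra.
Import Order.TTheory GRing.Theory Num.Theory.
Local Open Scope ring_scope.
Local Open Scope complex_scope.

Local Notation normc := ComplexField.Normc.normc.

Section ComplexFacts.
Variable R : realType.
Implicit Types (z w : R[i]) (k : R).

Lemma ReD z w : complex.Re (z + w) = complex.Re z + complex.Re w.
Proof. by case: z; case: w. Qed.

Lemma ImD z w : complex.Im (z + w) = complex.Im z + complex.Im w.
Proof. by case: z; case: w. Qed.

Lemma ReMr k z : complex.Re (k%:C * z) = k * complex.Re z.
Proof. by case: z => a b /=; ring. Qed.

Lemma ReJ z : complex.Re z^* = complex.Re z.
Proof. by case: z. Qed.

Lemma Im_iM z : complex.Im ('i * z) = complex.Re z.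
Proof. by case: z => a b /=; ring. Qed.

Lemma Im_iJM z : complex.Im ('i^* * z) = - complex.Re z.
Proof. by case: z => a b /=; ring. Qed.

Lemma i_unimodular : 'i * 'i^* = 1 :> R[i].
Proof. by apply/eqP; rewrite eq_complex /=; apply/andP; split; apply/eqP; ring. Qed.

Lemma normc_ge0 z : 0 <= normc z.
Proof. by case: z => a b; apply: sqrtr_ge0. Qed.

Lemma Re_le_normc z : complex.Re z <= normc z.
Proof.
case: z => a b /=; apply: le_trans (ler_norm a) _.
by rewrite -sqrtr_sqr ler_sqrt ?addr_ge0 ?sqr_ge0 // lerDl sqr_ge0.
Qed.

Lemma Im_le_normc z : complex.Im z <= normc z.
Proof.
case: z => a b /=; apply: le_trans (ler_norm b) _.
by rewrite -sqrtr_sqr ler_sqrt ?addr_ge0 ?sqr_ge0 // lerDr sqr_ge0.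
Qed.

Lemma normc_le_ReIm z : normc z <= `|complex.Re z| + `|complex.Im z|.
Proof.
case: z => a b /=.
rewrite -[X in _ <= X]ger0_norm ?addr_ge0 // -sqrtr_sqr ler_sqrt ?sqr_ge0 //.
have := real_normK (num_real a); have := real_normK (num_real b).
have := normr_ge0 a; have := normr_ge0 b; nra.
Qed.

End ComplexFacts.

Lemma le_of_sqr_le_mul (R : realFieldType) (a c : R) :
  0 <= a -> 0 <= c -> a ^+ 2 <= c * a -> a <= c.
Proof. by move=> a0 c0 h; nra. Qed.

(* The final arithmetic: if m <= (a + b) / 2 and a, b <= 2 w, then
   m / 2 + |a - b| / 4 <= (a + b) / 4 + |a - b| / 4 = max(a, b) / 2 <= w. *)
Lemma half_plus_quarter_dist_le (R : realFieldType) (m a b w : R) :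
  m <= 2^-1 * (a + b) -> a <= 2 * w -> b <= 2 * w ->
  2^-1 * m + 4^-1 * `|a - b| <= w.
Proof.
move=> hm ha hb; have : `|a - b| <= 4 * w - a - b.
  by rewrite ler_norml; apply/andP; split; lra.
lra.
Qed.

Section InnerProductSpace.
Context {R : realType} {H : lmodType R[i]} {ip : H -> H -> R[i]}.
Hypothesis hip : is_inner_product ip.
Local Notation rip u v := (complex.Re (ip u v)).
Local Notation N := (ipnorm ip).
Implicit Types (x y z u v : H) (a : R[i]) (k : R).

Lemma ipDl x y z : ip (x + y) z = ip x z + ip y z.
Proof. by have := ip_linear_l hip 1 x y z; rewrite scale1r mul1r. Qed.

Lemma ip0l z : ip 0 z = 0.
Proof. by apply: (addIr (ip 0 z)); rewrite -ipDl !add0r. Qed.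

Lemma ipZl a x z : ip (a *: x) z = a * ip x z.
Proof. by rewrite -[a *: x]addr0 ip_linear_l // ip0l addr0. Qed.

Lemma ipDr x y z : ip z (x + y) = ip z x + ip z y.
Proof. by rewrite !(ip_conj_sym hip _ z) ipDl rmorphD. Qed.

Lemma ipZr a x z : ip z (a *: x) = a^* * ip z x.
Proof. by rewrite !(ip_conj_sym hip _ z) ipZl rmorphM. Qed.

Lemma ip0r z : ip z 0 = 0.
Proof. by rewrite ip_conj_sym // ip0l /= oppr0. Qed.

Lemma ip_unimodular a x : a * a^* = 1 -> ip (a *: x) (a *: x) = ip x x.
Proof. by move=> ha; rewrite ipZl ipZr mulrA ha mul1r. Qed.

Lemma ip_ext u v : (forall z, ip z u = ip z v) -> u = v.
Proof.
move=> h; apply/subr0_eq/(ip_definite hip).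
by rewrite -scaleN1r ipDr ipZr h rmorphN1 mulN1r subrr.
Qed.

Lemma ripC u v : rip u v = rip v u.
Proof. by rewrite (ip_conj_sym hip u v) ReJ. Qed.

Lemma ripDl x y z : rip (x + y) z = rip x z + rip y z.
Proof. by rewrite ipDl ReD. Qed.

Lemma ripDr x y z : rip z (x + y) = rip z x + rip z y.
Proof. by rewrite ipDr ReD. Qed.

Lemma ripZl k x z : rip (k%:C *: x) z = k * rip x z.
Proof. by rewrite ipZl ReMr. Qed.

Lemma ripZr k x z : rip z (k%:C *: x) = k * rip z x.
Proof. by rewrite ipZr; case: (ip z x) => a b /=; ring. Qed.

Lemma ripNr x z : rip z (- x) = - rip z x.
Proof. by rewrite -scaleN1r -(rmorphN1 (real_complex R)) ripZr mulN1r. Qed.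

Lemma ipxx x : ip x x = (rip x x)%:C.
Proof. by have := ger0_Im (ip_nonneg hip x); case: (ip x x) => a b /= ->. Qed.

Lemma rip_ge0 x : 0 <= rip x x.
Proof. by have := ip_nonneg hip x; rewrite ipxx lecR. Qed.

Lemma N_ge0 x : 0 <= N x.
Proof. exact: sqrtr_ge0. Qed.

Lemma N_sq x : N x ^+ 2 = rip x x.
Proof. by rewrite sqr_sqrtr // rip_ge0. Qed.

Lemma N0 : N 0 = 0.
Proof. by rewrite /ipnorm ip0l sqrtr0. Qed.

Lemma N_eq0 x : N x = 0 -> x = 0.
Proof. by move=> h; apply: (ip_definite hip); rewrite ipxx -N_sq h expr0n. Qed.

Lemma N_scale k x : N (k%:C *: x) = `|k| * N x.
Proof. by rewrite /ipnorm ripZl ripZr mulrA -expr2 sqrtrM ?sqr_ge0 // sqrtr_sqr. Qed.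

Lemma N_unimodular a x : a * a^* = 1 -> N (a *: x) = N x.
Proof. by move=> ha; rewrite /ipnorm ip_unimodular. Qed.

Lemma N_double v : N (v + v) = 2 * N v.
Proof.
by rewrite -mulr2n -scaler_nat -(rmorph_nat (real_complex R)) N_scale normr_nat.
Qed.

(* Cauchy-Schwarz inequality, real part: expand <s u + t v, s u + t v> >= 0
   with (s, t) = (N v, -N u) and (N v, N u). *)
Lemma CauchySchwarz_Re u v : `|rip u v| <= N u * N v.
Proof.
have [u0|nu] := eqVneq (N u) 0; first by rewrite (N_eq0 _ u0) ip0l normr0 N0 mul0r.
have [v0|nv] := eqVneq (N v) 0; first by rewrite (N_eq0 _ v0) ip0r normr0 N0 mulr0.
have expand s t : rip (s%:C *: u + t%:C *: v) (s%:C *: u + t%:C *: v) =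
    s ^+ 2 * N u ^+ 2 + 2 * s * t * rip u v + t ^+ 2 * N v ^+ 2.
  by rewrite ripDl !ripDr !ripZl !ripZr (ripC v u) !N_sq; ring.
have hminus := rip_ge0 ((N v)%:C *: u + (- N u)%:C *: v).
have hplus := rip_ge0 ((N v)%:C *: u + (N u)%:C *: v).
rewrite expand in hminus; rewrite expand in hplus.
have uv_gt0 : 0 < N u * N v by rewrite mulr_gt0 // lt_def ?nu ?nv N_ge0.
by rewrite ler_norml; apply/andP; split; nra.
Qed.

(* Cauchy-Schwarz for the imaginary part, by rotating u through 'i. *)
Lemma CauchySchwarz_Im u v : `|complex.Im (ip u v)| <= N u * N v.
Proof.
rewrite -normrN -ReiNIm mulrC -ipZl -(N_unimodular _ u (i_unimodular R)).
exact: CauchySchwarz_Re.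
Qed.

(* Hence |<u, v>| <= 2 ||u|| ||v||, a crude bound used to see that the set
   defining the numerical radius is bounded. *)
Lemma normc_ip_le u v : normc (ip u v) <= 2 * (N u * N v).
Proof.
apply: le_trans (normc_le_ReIm _ _) _; rewrite mulr2n mulrDl mul1r.
exact: lerD (CauchySchwarz_Re u v) (CauchySchwarz_Im u v).
Qed.

Lemma N_triangle u v : N (u + v) <= N u + N v.
Proof.
have e : N (u + v) ^+ 2 = N u ^+ 2 + 2 * rip u v + N v ^+ 2.
  by rewrite !N_sq ripDl !ripDr (ripC v u); ring.
have := CauchySchwarz_Re u v; have := ler_norm (rip u v).
have := N_ge0 u; have := N_ge0 v; have := N_ge0 (u + v); nra.
Qed.

Lemma N_opp x : N (- x) = N x.
Proof. by rewrite -scaleN1r -(rmorphN1 (real_complex R)) N_scale normrN normr1 mul1r. Qed.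

Lemma N_sub u v : N (u - v) <= N u + N v.
Proof. by rewrite -(N_opp v) N_triangle. Qed.


Definition op_linear (T : H -> H) : Prop :=
  forall a x y, T (a *: x + y) = a *: T x + T y.

Lemma linear0 T : op_linear T -> T 0 = 0.
Proof.
move=> hT; have := hT 1 0 0; rewrite scaler0 addr0 scale1r => h.
by apply: (addrI (T 0)); rewrite -h addr0.
Qed.

Lemma linearZ T a x : op_linear T -> T (a *: x) = a *: T x.
Proof. by move=> hT; rewrite -[a *: x]addr0 hT linear0 // addr0. Qed.

Lemma bounded_opD T S : bounded_op ip T -> bounded_op ip S -> bounded_op ip (T \+ S).
Proof.
case=> lT [MT hT] [lS [MS hS]]; split.
  by move=> a x y /=; rewrite lT lS scalerDr addrACA.
exists (MT + MS) => x /=; rewrite mulrDl.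
exact: le_trans (N_triangle _ _) (lerD (hT x) (hS x)).
Qed.

Lemma bounded_opN T : bounded_op ip T -> bounded_op ip (fun x => - T x).
Proof.
case=> lT [M hT]; split; last by exists M => x; rewrite N_opp.
by move=> a x y; rewrite lT opprD scalerN.
Qed.

Lemma opnorm_ub T x : bounded_op ip T -> N x <= 1 -> N (T x) <= opnorm ip T.
Proof.
case=> _ [M hM] hx; apply: ub_le_sup; last by exists x.
exists `|M| => _ [y /= hy <-]; apply: le_trans (hM y) _.
move: hy; have := N_ge0 y; have := ler_norm M; have := normr_ge0 M; nra.
Qed.

Lemma opnorm_ge0 T : bounded_op ip T -> 0 <= opnorm ip T.
Proof.
by move=> hT; apply: le_trans (N_ge0 (T 0)) (opnorm_ub _ 0 hT _); rewrite N0 ler01.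
Qed.

Lemma opnorm_le T K : (forall x, N x <= 1 -> N (T x) <= K) -> opnorm ip T <= K.
Proof.
move=> hK; apply: ge_sup; first by exists (N (T 0)), 0; rewrite //= N0 ler01.
by move=> _ [y hy <-]; apply: hK.
Qed.

Lemma opnorm_bound T x : bounded_op ip T -> N (T x) <= opnorm ip T * N x.
Proof.
move=> hT; have lT := hT.1.
have [x0|nx] := eqVneq (N x) 0.
  by rewrite (N_eq0 _ x0) linear0 // N0 mulr0.
have px : 0 < N x by rewrite lt_def nx N_ge0.
have in_ball : N ((N x)^-1%:C *: x) <= 1.
  by rewrite N_scale ger0_norm ?invr_ge0 ?N_ge0 // mulVf.
have := opnorm_ub _ _ hT in_ball.
rewrite linearZ // N_scale ger0_norm ?invr_ge0 ?N_ge0 //.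
by rewrite ler_pdivrMl // mulrC.
Qed.

Lemma opnorm_le_mul T K : 0 <= K -> (forall x, N (T x) <= K * N x) -> opnorm ip T <= K.
Proof.
move=> K0 hK; apply: opnorm_le => x hx.
by apply: le_trans (hK x) _; rewrite ler_piMr.
Qed.

Lemma opnorm_le_half T P M : bounded_op ip P -> bounded_op ip M ->
  (forall x, N (T x + T x) <= N (P x) + N (M x)) ->
  opnorm ip T <= 2^-1 * (opnorm ip P + opnorm ip M).
Proof.
move=> hP hM hT; apply: opnorm_le => x hx.
have := hT x; rewrite N_double.
have := opnorm_ub _ _ hP hx; have := opnorm_ub _ _ hM hx; lra.
Qed.

(* An operator and its "partner" are both controlled by the norms of their sum
   and difference: 2 T = (T + S) + (T - S) and 2 S = (T + S) - (T - S). *)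
Lemma opnorm_le_sum_diff_l T S : bounded_op ip T -> bounded_op ip S ->
  opnorm ip T <= 2^-1 * (opnorm ip (T \+ S) + opnorm ip (T \- S)).
Proof.
move=> hT hS; apply: (opnorm_le_half _ _ _ (bounded_opD _ _ hT hS)
  (bounded_opD _ _ hT (bounded_opN _ hS))) => x.
have -> : T x + T x = (T x + S x) + (T x - S x) by rewrite addrACA subrr addr0.
exact: N_triangle.
Qed.

Lemma opnorm_le_sum_diff_r T S : bounded_op ip T -> bounded_op ip S ->
  opnorm ip S <= 2^-1 * (opnorm ip (T \+ S) + opnorm ip (T \- S)).
Proof.
move=> hT hS; apply: (opnorm_le_half _ _ _ (bounded_opD _ _ hT hS)
  (bounded_opD _ _ hT (bounded_opN _ hS))) => x.
have -> : S x + S x = (T x + S x) - (T x - S x) by rewrite opprB [RHS]addrC addrA subrK.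
exact: N_sub.
Qed.

Lemma adjoint_sym T S : is_adjoint ip T S -> is_adjoint ip S T.
Proof.
by move=> hTS x y; rewrite (ip_conj_sym hip) -hTS -(ip_conj_sym hip).
Qed.

Lemma adjoint_linear T S : op_linear T -> is_adjoint ip T S -> op_linear S.
Proof.
move=> lT hTS a x y; apply: ip_ext => z.
by rewrite -hTS ipDr ipZr !hTS ipDr ipZr.
Qed.

(* ||T x||^2 = Re <x, S T x> <= ||x|| ||S|| ||T x||, hence ||T x|| <= ||S|| ||x||. *)
Lemma adjoint_bound T S x : is_adjoint ip T S -> bounded_op ip S ->
  N (T x) <= opnorm ip S * N x.
Proof.
move=> hTS hS; apply: le_of_sqr_le_mul (N_ge0 _) _ _.
  by rewrite mulr_ge0 ?N_ge0 ?opnorm_ge0.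
rewrite N_sq hTS; apply: le_trans (ler_norm _) _.
apply: le_trans (CauchySchwarz_Re _ _) _.
rewrite [X in _ <= X]mulrAC [X in _ <= X]mulrC ler_wpM2l ?N_ge0 //.
exact: opnorm_bound.
Qed.

Lemma adjoint_bounded T S : bounded_op ip T -> is_adjoint ip T S -> bounded_op ip S.
Proof.
move=> hT hTS; split; first exact: adjoint_linear _ _ hT.1 hTS.
by exists (opnorm ip T) => x; apply: adjoint_bound (adjoint_sym _ _ hTS) hT.
Qed.

Lemma opnorm_adjoint_le T S : bounded_op ip T -> is_adjoint ip T S ->
  opnorm ip T <= opnorm ip S.
Proof.
move=> hT hTS; have hS := adjoint_bounded _ _ hT hTS.
by apply: opnorm_le_mul (opnorm_ge0 _ hS) _ => x; apply: adjoint_bound.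
Qed.


(* A pair (x, y) of total squared norm one, i.e. a unit vector of H (+) H. *)
Definition unit_pair x y : Prop := rip x x + rip y y = 1.

Lemma unit_pairC x y : unit_pair x y -> unit_pair y x.
Proof. by rewrite /unit_pair addrC. Qed.

Lemma unit_pair_le1 x y : unit_pair x y -> N x <= 1.
Proof.
rewrite /unit_pair -!N_sq => h.
have := N_ge0 x; have := N_ge0 y; nra.
Qed.

Lemma ipnorm_sum_unit p : ipnorm (ip_sum ip) p = 1 <-> unit_pair p.1 p.2.
Proof.
rewrite /ipnorm /ip_sum /unit_pair ReD; split=> [h|->]; last exact: sqrtr1.
by rewrite -[LHS]sqr_sqrtr ?addr_ge0 ?rip_ge0 // h expr1n.
Qed.

(* A linear D with Re <D y, x> <= K on unit pairs has ||D|| <= 2 K: test the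
   bound on the unit pair (D y / (sqrt 2 ||D y||), y / (sqrt 2 ||y||)). *)
Lemma opnorm_le_of_form D K : op_linear D -> 0 <= K ->
  (forall x y, unit_pair x y -> rip (D y) x <= K) -> opnorm ip D <= 2 * K.
Proof.
move=> lD K0 hD; apply: opnorm_le_mul => [|y]; first by rewrite mulr_ge0.
set z := D y.
have [z0|nz] := eqVneq (N z) 0; first by rewrite z0 !mulr_ge0 ?N_ge0.
have [y0|ny] := eqVneq (N y) 0.
  by move: nz; rewrite /z (N_eq0 _ y0) linear0 // N0 eqxx.
set r := Num.sqrt (2 : R).
have r2 : r ^+ 2 = 2 by rewrite sqr_sqrtr // ler0n.
have nr : r != 0 by rewrite gt_eqF // sqrtr_gt0 ltr0n.
set s := (r * N z)^-1; set t := (r * N y)^-1.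
have half u : N u != 0 -> (r * N u)^-1 * ((r * N u)^-1 * N u ^+ 2) = 2^-1.
  by move=> nu; rewrite -r2; field; rewrite nu nr.
have unit : unit_pair (s%:C *: z) (t%:C *: y).
  by rewrite /unit_pair !ripZl !ripZr -!N_sq !half //; lra.
have := hD _ _ unit; rewrite linearZ // ripZl ripZr -N_sq.
have -> : t * (s * N z ^+ 2) = N z / (2 * N y).
  by rewrite -r2 /s /t; field; rewrite ny nz nr.
by rewrite ler_pdivrMr ?mulr_gt0 // ?lt_def ?ny ?N_ge0 // mulrCA mulrA.
Qed.

Section BlockMatrix.
Context {B C Cs : H -> H}.
Hypotheses (hB : bounded_op ip B) (hC : bounded_op ip C)
  (hadj : is_adjoint ip C Cs).
Local Notation W :=
  (numrad (ip_sum ip) (opmatrix (@zero_op R H) B C (@zero_op R H))).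

(* <[0 B; C 0] (x, y), (x, y)> = <B y, x> + <C x, y>, which is bounded on unit
   pairs; so every such value is dominated by the numerical radius. *)
Lemma numrad_ub x y : unit_pair x y -> normc (ip (B y) x + ip (C x) y) <= W.
Proof.
have value u v : ip_sum ip (opmatrix (@zero_op R H) B C (@zero_op R H) (u, v)) (u, v)
    = ip (B v) u + ip (C u) v.
  by rewrite /ip_sum /opmatrix /zero_op /= addr0 add0r.
move=> hxy; apply: ub_le_sup; last first.
  by exists (x, y); [apply/ipnorm_sum_unit | rewrite value].
exists (2 * opnorm ip B + 2 * opnorm ip C) => _ [[u v] /ipnorm_sum_unit /= huv <-].
have hu := unit_pair_le1 _ _ huv; have hv := unit_pair_le1 _ _ (unit_pairC _ _ huv).
rewrite value; apply: le_trans (le_normcD _ _) _.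
apply: lerD; apply: le_trans (normc_ip_le _ _) _; rewrite ler_pM2l ?ltr0n //.
  have := opnorm_ub _ _ hB hv; have := N_ge0 u; have := N_ge0 (B v); nra.
have := opnorm_ub _ _ hC hu; have := N_ge0 v; have := N_ge0 (C u); nra.
Qed.

(* w >= 0: either some unit vector exists and w dominates a modulus, or the
   defining set is empty and its supremum is 0. *)
Lemma numrad_ge0 : 0 <= W.
Proof.
have [[x [y hxy]]|no_unit] := pselect (exists x y, unit_pair x y).
  exact: le_trans (normc_ge0 _ _) (numrad_ub _ _ hxy).
rewrite /numrad sup_out // => -[[_ [[x y] /ipnorm_sum_unit hxy _]] _].
by apply: no_unit; exists x, y.
Qed.

(* Real part of the quadratic form at (x, y): Re <(B + C^* ) y, x> <= w. *)
Lemma numrad_ge_plus x y : unit_pair x y -> rip ((B \+ Cs) y) x <= W.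
Proof.
move=> hxy; apply: le_trans (numrad_ub _ _ hxy); apply: le_trans (Re_le_normc _ _).
by rewrite /= ReD ripDl hadj (ripC x).
Qed.

(* Imaginary part of the quadratic form at (x, 'i y): Re <(B - C^* ) y, x> <= w. *)
Lemma numrad_ge_minus x y : unit_pair x y -> rip ((B \- Cs) y) x <= W.
Proof.
move=> hxy.
have hxiy : unit_pair x ('i *: y) by rewrite /unit_pair ip_unimodular ?i_unimodular.
apply: le_trans (numrad_ub _ _ hxiy); apply: le_trans (Im_le_normc _ _).
rewrite (linearZ _ _ _ hB.1) ipZl ipZr ImD Im_iM Im_iJM hadj.
by rewrite /= ripDl (ripC (- _)) ripNr (ripC x).
Qed.

End BlockMatrix.
End InnerProductSpace.

Theorem mainTheorem2 (R : realType) (H : lmodType R[i]) (ip : H -> H -> R[i])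
  (B C Cstar : H -> H) :
  is_hilbert ip ->
  bounded_op ip B -> bounded_op ip C ->
  is_adjoint ip C Cstar ->
  numrad (ip_sum ip) (opmatrix (@zero_op R H) B C (@zero_op R H))
    >= 2^-1 * Num.max (opnorm ip B) (opnorm ip C)
       + 4^-1 * `| opnorm ip (B \+ Cstar) - opnorm ip (B \- Cstar) |.
Proof.
case=> hip _ hB hC hadj.
have hCs : bounded_op ip Cstar := adjoint_bounded hip _ _ hC hadj.
have hW := numrad_ge0 hip hB hC.
apply: half_plus_quarter_dist_le.
- rewrite ge_max (opnorm_le_sum_diff_l hip _ _ hB hCs) /=.
  apply: le_trans (opnorm_adjoint_le hip _ _ hC hadj) _.
  exact: opnorm_le_sum_diff_r hip _ _ hB hCs.
- apply: (opnorm_le_of_form hip) hW (numrad_ge_plus hip hB hC hadj).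
  exact: (bounded_opD hip _ _ hB hCs).1.
- apply: (opnorm_le_of_form hip) hW (numrad_ge_minus hip hB hC hadj).
  exact: (bounded_opD hip _ _ hB (bounded_opN hip _ hCs)).1.
Qed.
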